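(* Let $N(x)=\frac{1}{\sqrt{2\pi}}\int_{-\infty}^x e^{-t^2/2}\,dt$ be the standard normal cumulative distribution function. For $\alpha>0$ define the standardized call function $\chi_\alpha:(0,+\infty)\to\mathbb{R}$ by \[ \chi_\alpha(x) := N\Big(\tfrac{\alpha}{2}\big(x-\tfrac{1}{x}\big)\Big) - e^{\alpha^2/2}\, N\Big(-\tfrac{\alpha}{2}\big(x+\tfrac{1}{x}\big)\Big), \qquad x>0. \] Then for every $\alpha>0$: (i) $\lim_{x\to 0^+}\chi_\alpha(x)=0$ and $\lim_{x\to+\infty}\chi_\alpha(x)=1$; (ii) $\chi_\alpha$ is strictly increasing on $(0,+\infty)$; (iii) $\chi_\alpha$ is strictly convex on $(0,1]$ and strictly concave on $[1,+\infty)$. *)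

From Stdlib Require Import Reals.
From Coquelicot Require Import Coquelicot.
Open Scope R_scope.

Definition Ncdf (x : R) : R :=
  / sqrt (2 * PI) *
  RInt_gen (fun t => exp (- t ^ 2 / 2)) (Rbar_locally m_infty) (at_point x).

Definition chi (alpha x : R) : R :=
  Ncdf (alpha / 2 * (x - / x))
  - exp (alpha ^ 2 / 2) * Ncdf (- (alpha / 2 * (x + / x))).

(* The Gaussian integral is evaluated by Feynman's trick.  With
   g t = exp (-t^2/2) and G x = int_0^x g, the parametric integral
   F x = int_0^1 exp (-x^2 (1+t^2)/2) / (1+t^2) dt satisfies F' = - g G, so
   F + G^2/2 is constant, equal to F 0 = atan 1 = PI/4; since 0 <= F <= g,
   F vanishes at +oo and G (+oo) = sqrt (PI/2).  Hence
   N = (G + sqrt (PI/2)) / sqrt (2 PI) tends to 0 and 1 at -oo and +oo.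

   For chi, the identity exp (alpha^2/2) g (alpha/2 (x + 1/x)) = g (alpha/2 (x - 1/x))
   collapses the derivative to chi' x = alpha / sqrt (2 PI) * g (alpha/2 (x - 1/x)).
   It is positive, and increasing exactly while alpha/2 (x - 1/x) <= 0, that is on
   (0, 1]; convexity and concavity then follow from the mean value theorem. *)

From Stdlib Require Import Reals Lra.
From Coquelicot Require Import Coquelicot.
Open Scope R_scope.

Section RbarLimits.

Context {T : Type} {F : (T -> Prop) -> Prop} {FF : Filter F}.

Lemma filterlim_Rbar_plus_fun (f g : T -> R) (lf lg l : Rbar) :
  is_Rbar_plus lf lg l ->
  filterlim f F (Rbar_locally lf) -> filterlim g F (Rbar_locally lg) ->
  filterlim (fun x => f x + g x) F (Rbar_locally l).
Proof.
  intros Hl Hf Hg.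
  exact (filterlim_comp_2 f g Rplus Hf Hg (filterlim_Rbar_plus _ _ _ Hl)).
Qed.

Lemma filterlim_Rbar_scal_fun (a : R) (f : T -> R) (l m : Rbar) :
  is_Rbar_mult a l m -> filterlim f F (Rbar_locally l) ->
  filterlim (fun x => a * f x) F (Rbar_locally m).
Proof.
  intros Hm Hf. rewrite <- (is_Rbar_mult_unique _ _ _ Hm).
  exact (filterlim_comp _ _ _ f (Rmult a) _ _ _ Hf (filterlim_Rbar_mult_l a l)).
Qed.

Lemma filterlim_lin_comb (f g : T -> R) (a b c d : R) :
  filterlim f F (locally a) -> filterlim g F (locally b) ->
  filterlim (fun x => c * f x + d * g x) F (locally (c * a + d * b)).
Proof.
  intros Hf Hg.
  apply (filterlim_Rbar_plus_fun _ _ (c * a) (d * b) (c * a + d * b));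
    [reflexivity | apply (filterlim_Rbar_scal_fun _ _ a) | apply (filterlim_Rbar_scal_fun _ _ b)];
    (reflexivity || assumption).
Qed.

End RbarLimits.

Lemma is_Rbar_mult_pos_infty (a : R) : 0 < a ->
  is_Rbar_mult a p_infty p_infty /\ is_Rbar_mult a m_infty m_infty.
Proof.
  intros Ha. split; apply is_Rbar_mult_sym;
    [apply is_Rbar_mult_p_infty_pos | apply is_Rbar_mult_m_infty_pos]; exact Ha.
Qed.

Lemma exp_le_compat x y : x <= y -> exp x <= exp y.
Proof. intros [H|H]; [apply Rlt_le, exp_increasing; exact H | rewrite H; apply Rle_refl]. Qed.

Lemma derive_increasing_strict_convex (f df : R -> R) x y t :
  x < y -> 0 < t < 1 ->
  (forall z, x <= z <= y -> is_derive f z (df z)) ->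
  (forall u v, x <= u -> u < v -> v <= y -> df u < df v) ->
  f (t * x + (1 - t) * y) < t * f x + (1 - t) * f y.
Proof.
  intros Hxy Ht Hd Hmono.
  set (z := t * x + (1 - t) * y).
  assert (Hxz : x < z) by (unfold z; nra).
  assert (Hzy : z < y) by (unfold z; nra).
  destruct (MVT_cor2 f df x z Hxz) as [c1 [E1 H1]].
  { intros c Hc. apply is_derive_Reals, Hd. lra. }
  destruct (MVT_cor2 f df z y Hzy) as [c2 [E2 H2]].
  { intros c Hc. apply is_derive_Reals, Hd. lra. }
  assert (Hc : df c1 < df c2) by (apply Hmono; lra).
  assert (Hgap : t * f x + (1 - t) * f y - f z = t * (1 - t) * (y - x) * (df c2 - df c1)).
  { replace (f x) with (f z - df c1 * (z - x)) by lra.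
    replace (f y) with (f z + df c2 * (y - z)) by lra.
    unfold z. ring. }
  assert (0 < t * (1 - t) * (y - x) * (df c2 - df c1)).
  { repeat apply Rmult_lt_0_compat; lra. }
  lra.
Qed.

Lemma derive_decreasing_strict_concave (f df : R -> R) x y t :
  x < y -> 0 < t < 1 ->
  (forall z, x <= z <= y -> is_derive f z (df z)) ->
  (forall u v, x <= u -> u < v -> v <= y -> df v < df u) ->
  t * f x + (1 - t) * f y < f (t * x + (1 - t) * y).
Proof.
  intros Hxy Ht Hd Hmono.
  cut (- f (t * x + (1 - t) * y) < t * - f x + (1 - t) * - f y); [lra|].
  apply (derive_increasing_strict_convex (fun z => - f z) (fun z => - df z)); auto.
  - intros z Hz. apply (is_derive_opp f), Hd, Hz.
  - intros u v Hu Huv Hv. apply Ropp_lt_contravar, Hmono; assumption.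
Qed.

Definition gauss (t : R) : R := exp (- t ^ 2 / 2).

Lemma gauss_pos t : 0 < gauss t.
Proof. apply exp_pos. Qed.

Lemma continuous_gauss t : continuous gauss t.
Proof. apply (@ex_derive_continuous R_AbsRing R_NormedModule); unfold gauss; auto_derive; auto. Qed.

Lemma ex_RInt_gauss a b : ex_RInt gauss a b.
Proof. apply (@ex_RInt_continuous R_CompleteNormedModule); intros; apply continuous_gauss. Qed.

Lemma gauss_lt a b : b ^ 2 < a ^ 2 -> gauss a < gauss b.
Proof. intros H; apply exp_increasing; lra. Qed.

Lemma gauss_lim_p_infty : filterlim gauss (Rbar_locally p_infty) (locally 0).
Proof.
  apply (filterlim_comp _ _ _ (fun x => - x ^ 2 / 2) exp _ (Rbar_locally m_infty)).
  - intros Q [M HM]. exists (Rabs M + 1). intros x Hx. apply HM.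
    pose proof (Rle_abs (- M)) as HM'. rewrite Rabs_Ropp in HM'. simpl. nra.
  - exact is_lim_exp_m.
Qed.

Definition gauss_int (x : R) : R := RInt gauss 0 x.

Lemma is_derive_gauss_int x : is_derive gauss_int x (gauss x).
Proof.
  apply is_derive_RInt with 0.
  - apply filter_forall; intro y. apply (@RInt_correct R_CompleteNormedModule), ex_RInt_gauss.
  - apply continuous_gauss.
Qed.

Lemma gauss_int_0 : gauss_int 0 = 0.
Proof. unfold gauss_int. rewrite RInt_point. reflexivity. Qed.

Lemma gauss_int_ge0 x : 0 <= x -> 0 <= gauss_int x.
Proof.
  intros Hx. apply RInt_ge_0; auto. apply ex_RInt_gauss.
  intros; apply Rlt_le, gauss_pos.
Qed.

Lemma gauss_int_opp x : gauss_int (- x) = - gauss_int x.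
Proof.
  unfold gauss_int.
  pose proof (@RInt_comp_lin R_CompleteNormedModule gauss (-1) 0 0 x (ex_RInt_gauss _ _)) as H.
  replace (-1 * 0 + 0) with 0 in H by ring.
  replace (-1 * x + 0) with (- x) in H by ring.
  rewrite <- H, (RInt_ext _ (fun y => scal (-1) (gauss y))), (@RInt_scal R_CompleteNormedModule).
  - unfold scal; simpl; unfold mult; simpl. ring.
  - apply ex_RInt_gauss.
  - intros y _. unfold gauss. do 3 f_equal. simpl; ring.
Qed.

Definition feynman_kernel (x t : R) : R :=
  exp (- (x ^ 2 * (1 + t ^ 2)) / 2) / (1 + t ^ 2).

Definition feynman (x : R) : R := RInt (feynman_kernel x) 0 1.

Lemma one_plus_sqr_pos t : 0 < 1 + t ^ 2.
Proof. nra. Qed.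

Lemma continuous_feynman_kernel x t : continuous (feynman_kernel x) t.
Proof.
  apply (@ex_derive_continuous R_AbsRing R_NormedModule).
  unfold feynman_kernel. auto_derive. pose proof (one_plus_sqr_pos t); lra.
Qed.

Lemma ex_RInt_feynman_kernel x a b : ex_RInt (feynman_kernel x) a b.
Proof.
  apply (@ex_RInt_continuous R_CompleteNormedModule); intros.
  apply continuous_feynman_kernel.
Qed.

Lemma is_derive_feynman_kernel x t :
  is_derive (fun u => feynman_kernel u t) x (- x * exp (- (x ^ 2 * (1 + t ^ 2)) / 2)).
Proof.
  pose proof (one_plus_sqr_pos t). unfold feynman_kernel. auto_derive; auto.
  replace (x * (x * 1) * (1 + t * (t * 1))) with (x ^ 2 * (1 + t ^ 2)) by ring.
  unfold Rdiv. field. simpl in *; lra.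
Qed.

Lemma continuity_2d_pt_feynman_kernel_derive x t :
  continuity_2d_pt (fun u t => - u * exp (- (u ^ 2 * (1 + t ^ 2)) / 2)) x t.
Proof.
  apply continuity_2d_pt_mult.
  - apply continuity_2d_pt_opp, continuity_2d_pt_id1.
  - apply continuity_1d_2d_pt_comp.
    + apply derivable_continuous_pt, derivable_pt_exp.
    + apply continuity_2d_pt_ext with (fun u v => - (u * u * (1 + v * v)) * / 2).
      { intros; simpl; field. }
      apply continuity_2d_pt_mult; [|apply continuity_2d_pt_const].
      apply continuity_2d_pt_opp, continuity_2d_pt_mult.
      * apply continuity_2d_pt_mult; apply continuity_2d_pt_id1.
      * apply continuity_2d_pt_plus; [apply continuity_2d_pt_const|].
        apply continuity_2d_pt_mult; apply continuity_2d_pt_id2.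
Qed.

Lemma RInt_gauss_dilate x : RInt (fun t => x * gauss (x * t)) 0 1 = gauss_int x.
Proof.
  unfold gauss_int.
  rewrite <- (Rmult_0_r x), <- (Rmult_1_r x) at 2.
  rewrite <- (Rplus_0_r (x * 0)), <- (Rplus_0_r (x * 1)).
  rewrite <- (@RInt_comp_lin R_CompleteNormedModule); [|apply ex_RInt_gauss].
  apply RInt_ext. intros t _. rewrite Rplus_0_r. reflexivity.
Qed.

Lemma is_derive_feynman x : is_derive feynman x (- gauss x * gauss_int x).
Proof.
  assert (Hd : forall u t, Derive (fun z => feynman_kernel z t) u
                         = - u * exp (- (u ^ 2 * (1 + t ^ 2)) / 2)).
  { intros; apply is_derive_unique, is_derive_feynman_kernel. }
  (* differentiation under the integral sign, then the substitution s = x t *)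
  replace (- gauss x * gauss_int x)
    with (RInt (fun t => Derive (fun u => feynman_kernel u t) x) 0 1).
  - apply is_derive_RInt_param.
    + apply filter_forall; intros y t _. eexists. apply is_derive_feynman_kernel.
    + intros t _. eapply continuity_2d_pt_ext.
      { intros u v; symmetry; apply Hd. }
      apply continuity_2d_pt_feynman_kernel_derive.
    + apply filter_forall; intro y. apply ex_RInt_feynman_kernel.
  - rewrite <- RInt_gauss_dilate, <- (@RInt_scal R_CompleteNormedModule).
    + apply RInt_ext. intros t _. rewrite Hd.
      unfold scal; simpl; unfold mult; simpl; unfold gauss.
      transitivity (- x * (exp (- x ^ 2 / 2) * exp (- (x * t) ^ 2 / 2))).
      { rewrite <- exp_plus. do 2 f_equal. field. }
      ring.
    + apply (@ex_RInt_continuous R_CompleteNormedModule); intros t _.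
      apply (@ex_derive_continuous R_AbsRing R_NormedModule).
      unfold gauss; auto_derive; auto.
Qed.

Lemma feynman_0 : feynman 0 = PI / 4.
Proof.
  unfold feynman.
  rewrite (RInt_ext _ (fun t => / (1 + t ^ 2))).
  - rewrite (is_RInt_unique _ 0 1 (atan 1 - atan 0)).
    + rewrite atan_1, atan_0. ring.
    + apply (@is_RInt_derive R_CompleteNormedModule atan).
      * intros t _. apply is_derive_Reals, derivable_pt_lim_atan.
      * intros t _. apply (@ex_derive_continuous R_AbsRing R_NormedModule).
        auto_derive. pose proof (one_plus_sqr_pos t). simpl in *. lra.
  - intros t _. unfold feynman_kernel.
    replace (- (0 ^ 2 * (1 + t ^ 2)) / 2) with 0 by (simpl; field).
    rewrite exp_0. apply Rmult_1_l.
Qed.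

Lemma feynman_kernel_bounds x t : 0 < feynman_kernel x t <= gauss x.
Proof.
  pose proof (one_plus_sqr_pos t).
  unfold feynman_kernel. split.
  - apply Rdiv_lt_0_compat; [apply exp_pos | lra].
  - apply Rle_div_l; [lra|].
    apply Rle_trans with (gauss x); [apply exp_le_compat; nra|].
    pose proof (gauss_pos x). nra.
Qed.

Lemma feynman_bounds x : 0 <= feynman x <= gauss x.
Proof.
  pose proof (fun t => feynman_kernel_bounds x t) as Hk.
  split.
  - apply RInt_ge_0; [lra | apply ex_RInt_feynman_kernel |].
    intros t _. apply Rlt_le, Hk.
  - unfold feynman.
    replace (gauss x) with (RInt (fun _ => gauss x) 0 1)
      by (rewrite RInt_const; unfold scal; simpl; unfold mult; simpl; ring).
    apply RInt_le; [lra | apply ex_RInt_feynman_kernel | apply ex_RInt_const |].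
    intros t _. apply Hk.
Qed.

Lemma feynman_lim_p_infty : filterlim feynman (Rbar_locally p_infty) (locally 0).
Proof.
  apply (is_lim_le_le_loc (fun _ => 0) gauss feynman p_infty 0);
    [| apply is_lim_const | exact gauss_lim_p_infty].
  exists 0. intros; apply feynman_bounds.
Qed.

Lemma feynman_gauss_int_sqr x : 0 <= x -> feynman x + gauss_int x ^ 2 / 2 = PI / 4.
Proof.
  assert (H0 : feynman 0 + gauss_int 0 ^ 2 / 2 = PI / 4).
  { rewrite feynman_0, gauss_int_0. field. }
  intros [Hx|<-]; [|exact H0].
  rewrite <- H0. symmetry.
  apply (eq_is_derive (fun y => feynman y + gauss_int y ^ 2 / 2)); [|exact Hx].
  intros y _.
  assert (Hd : is_derive (fun z => feynman z + / 2 * gauss_int z ^ 2) y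
                 (- gauss y * gauss_int y + / 2 * (INR 2 * gauss y * gauss_int y ^ pred 2))).
  { apply (is_derive_plus (V := R_NormedModule)); [apply is_derive_feynman|].
    apply is_derive_scal, is_derive_pow, is_derive_gauss_int. }
  replace (- gauss y * gauss_int y + _) with 0 in Hd by (simpl; field).
  eapply is_derive_ext; [|exact Hd]. intros z; simpl; field.
Qed.

Lemma gauss_int_lim_p_infty :
  filterlim gauss_int (Rbar_locally p_infty) (locally (sqrt (PI / 2))).
Proof.
  apply (filterlim_ext_loc (fun x => sqrt (1 * (PI / 2) + (-2) * feynman x))).
  - exists 0. intros x Hx.
    rewrite <- (sqrt_pow2 (gauss_int x)) by (apply gauss_int_ge0; lra).
    f_equal. pose proof (feynman_gauss_int_sqr x ltac:(lra)). lra.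
  - apply (filterlim_comp _ _ _ _ sqrt _ (locally (1 * (PI / 2) + (-2) * 0))).
    + apply filterlim_lin_comb; [apply filterlim_const | apply feynman_lim_p_infty].
    + replace (PI / 2) with (1 * (PI / 2) + (-2) * 0) at 2 by ring.
      apply continuity_pt_filterlim, continuity_pt_sqrt. pose proof PI_RGT_0. lra.
Qed.

Lemma gauss_int_lim_m_infty :
  filterlim gauss_int (Rbar_locally m_infty) (locally (- sqrt (PI / 2))).
Proof.
  apply (filterlim_ext (fun x => (-1) * gauss_int (- x))).
  { intros x. rewrite gauss_int_opp. ring. }
  apply (filterlim_Rbar_scal_fun _ _ (sqrt (PI / 2)) (- sqrt (PI / 2)));
    [unfold is_Rbar_mult, Rbar_mult'; do 2 f_equal; ring|].
  exact (filterlim_comp _ _ _ Ropp gauss_int _ _ _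
           (filterlim_Rbar_opp m_infty) gauss_int_lim_p_infty).
Qed.

Lemma Ncdf_gauss_int x : Ncdf x = / sqrt (2 * PI) * (gauss_int x + sqrt (PI / 2)).
Proof.
  unfold Ncdf. f_equal. apply is_RInt_gen_unique.
  assert (HD : forall y, Derive gauss_int y = gauss y)
    by (intros; apply is_derive_unique, is_derive_gauss_int).
  replace (gauss_int x + sqrt (PI / 2)) with (gauss_int x - - sqrt (PI / 2)) by ring.
  apply (is_RInt_gen_ext (Derive gauss_int)).
  { apply filter_forall. intros ab y _. apply HD. }
  apply is_RInt_gen_Derive.
  - apply filter_forall. intros ab y _. eexists; apply is_derive_gauss_int.
  - apply filter_forall. intros ab y _.
    apply (continuous_ext gauss); [intros; symmetry; apply HD | apply continuous_gauss].
  - exact gauss_int_lim_m_infty.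
  - intros Q HQ. exact (locally_singleton _ _ HQ).
Qed.

Lemma sqrt_2PI_pos : 0 < sqrt (2 * PI).
Proof. apply sqrt_lt_R0. pose proof PI_RGT_0. lra. Qed.

Lemma sqrt_2PI : sqrt (2 * PI) = 2 * sqrt (PI / 2).
Proof.
  pose proof PI_RGT_0.
  replace (2 * PI) with (2 ^ 2 * (PI / 2)) by field.
  rewrite sqrt_mult, sqrt_pow2; lra.
Qed.

Lemma Ncdf_lim_m_infty : filterlim Ncdf (Rbar_locally m_infty) (locally 0).
Proof.
  set (s := / sqrt (2 * PI)).
  apply (filterlim_ext (fun x => s * gauss_int x + s * sqrt (PI / 2))).
  { intros x. rewrite Ncdf_gauss_int. unfold s. ring. }
  replace 0 with (s * - sqrt (PI / 2) + s * sqrt (PI / 2)) by ring.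
  apply filterlim_lin_comb; [exact gauss_int_lim_m_infty | apply filterlim_const].
Qed.

Lemma Ncdf_lim_p_infty : filterlim Ncdf (Rbar_locally p_infty) (locally 1).
Proof.
  set (s := / sqrt (2 * PI)).
  apply (filterlim_ext (fun x => s * gauss_int x + s * sqrt (PI / 2))).
  { intros x. rewrite Ncdf_gauss_int. unfold s. ring. }
  replace 1 with (s * sqrt (PI / 2) + s * sqrt (PI / 2)).
  - apply filterlim_lin_comb; [exact gauss_int_lim_p_infty | apply filterlim_const].
  - pose proof sqrt_2PI_pos as Hs. unfold s. rewrite sqrt_2PI in *. field. lra.
Qed.

Lemma is_derive_Ncdf x : is_derive Ncdf x (/ sqrt (2 * PI) * gauss x).
Proof.
  apply (is_derive_ext (fun y => / sqrt (2 * PI) * (gauss_int y + sqrt (PI / 2)))).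
  { intros; symmetry; apply Ncdf_gauss_int. }
  apply is_derive_scal.
  rewrite <- (Rplus_0_r (gauss x)).
  apply (is_derive_plus (V := R_NormedModule)); [apply is_derive_gauss_int | auto_derive; auto].
Qed.

Definition chi_arg (alpha x : R) : R := alpha / 2 * (x - / x).

Lemma chi_arg_1 alpha : chi_arg alpha 1 = 0.
Proof. unfold chi_arg. rewrite Rinv_1. ring. Qed.

Lemma chi_arg_lt alpha x y : 0 < alpha -> 0 < x -> x < y -> chi_arg alpha x < chi_arg alpha y.
Proof.
  intros Ha Hx Hxy. unfold chi_arg.
  assert (/ y < / x) by (apply Rinv_lt_contravar; nra).
  apply Rmult_lt_compat_l; lra.
Qed.

Lemma chi_arg_le alpha x y : 0 < alpha -> 0 < x -> x <= y -> chi_arg alpha x <= chi_arg alpha y.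
Proof.
  intros Ha Hx [Hxy|<-]; [apply Rlt_le, chi_arg_lt | apply Rle_refl]; assumption.
Qed.

Lemma gauss_chi_arg_lt_le1 alpha u v : 0 < alpha -> 0 < u -> u < v -> v <= 1 ->
  gauss (chi_arg alpha u) < gauss (chi_arg alpha v).
Proof.
  intros Ha Hu Huv Hv. apply gauss_lt.
  pose proof (chi_arg_lt alpha u v Ha Hu Huv).
  pose proof (chi_arg_le alpha v 1 Ha ltac:(lra) Hv). rewrite chi_arg_1 in *. nra.
Qed.

Lemma gauss_chi_arg_lt_ge1 alpha u v : 0 < alpha -> 1 <= u -> u < v ->
  gauss (chi_arg alpha v) < gauss (chi_arg alpha u).
Proof.
  intros Ha Hu Huv. apply gauss_lt.
  pose proof (chi_arg_lt alpha u v Ha ltac:(lra) Huv).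
  pose proof (chi_arg_le alpha 1 u Ha ltac:(lra) Hu). rewrite chi_arg_1 in *. nra.
Qed.

Lemma exp_gauss_chi_arg alpha x : x <> 0 ->
  exp (alpha ^ 2 / 2) * gauss (- (alpha / 2 * (x + / x))) = gauss (chi_arg alpha x).
Proof. intros Hx. unfold gauss, chi_arg. rewrite <- exp_plus. f_equal. field. exact Hx. Qed.

Lemma is_derive_chi alpha x : 0 < x ->
  is_derive (chi alpha) x (alpha / sqrt (2 * PI) * gauss (chi_arg alpha x)).
Proof.
  intros Hx.
  assert (HA : is_derive (chi_arg alpha) x (alpha / 2 * (1 + / x ^ 2))).
  { unfold chi_arg. auto_derive; [lra|]. field. lra. }
  assert (HB : is_derive (fun y => - (alpha / 2 * (y + / y))) x (- (alpha / 2 * (1 - / x ^ 2)))).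
  { auto_derive; [lra|]. field. lra. }
  pose proof sqrt_2PI_pos as Hs.
  replace (alpha / sqrt (2 * PI) * gauss (chi_arg alpha x)) with
    (minus (scal (alpha / 2 * (1 + / x ^ 2)) (/ sqrt (2 * PI) * gauss (chi_arg alpha x)))
       (exp (alpha ^ 2 / 2) * scal (- (alpha / 2 * (1 - / x ^ 2)))
          (/ sqrt (2 * PI) * gauss (- (alpha / 2 * (x + / x)))))).
  - apply (is_derive_minus (V := R_NormedModule)).
    + exact (is_derive_comp Ncdf (chi_arg alpha) x _ _ (is_derive_Ncdf _) HA).
    + apply is_derive_scal.
      exact (is_derive_comp Ncdf _ x _ _ (is_derive_Ncdf _) HB).
  - rewrite <- (exp_gauss_chi_arg alpha x) by lra.
    unfold minus, plus, opp, scal; simpl; unfold mult; simpl.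
    field. split; lra.
Qed.

Lemma filterlim_chi {F : (R -> Prop) -> Prop} {FF : Filter F} alpha l a :
  filterlim (chi_arg alpha) F (Rbar_locally l) ->
  filterlim Ncdf (Rbar_locally l) (locally a) ->
  filterlim (fun x => alpha / 2 * (x + / x)) F (Rbar_locally p_infty) ->
  filterlim (chi alpha) F (locally a).
Proof.
  intros HA HN HB.
  apply (filterlim_ext (fun x => 1 * Ncdf (chi_arg alpha x)
                              + (- exp (alpha ^ 2 / 2)) * Ncdf (- (alpha / 2 * (x + / x))))).
  { intros x. unfold chi, chi_arg. ring. }
  replace (locally a) with (locally (1 * a + (- exp (alpha ^ 2 / 2)) * 0)) by (f_equal; ring).
  apply filterlim_lin_comb.
  - exact (filterlim_comp _ _ _ _ _ _ _ _ HA HN).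
  - apply (filterlim_comp _ _ _ _ Ncdf _ (Rbar_locally m_infty)); [|exact Ncdf_lim_m_infty].
    exact (filterlim_comp _ _ _ _ _ _ _ _ HB (filterlim_Rbar_opp p_infty)).
Qed.

Lemma chi_lim_0 alpha : 0 < alpha -> filterlim (chi alpha) (at_right 0) (locally 0).
Proof.
  intros Ha.
  destruct (is_Rbar_mult_pos_infty (alpha / 2) ltac:(lra)) as [Hp Hm].
  assert (Hid : filterlim (fun x => x) (at_right 0) (Rbar_locally 0)).
  { intros P [e He]. exists e. intros y Hy _. exact (He y Hy). }
  assert (Hopp := filterlim_comp _ _ _ _ _ _ _ _
                   filterlim_Rinv_0_right (filterlim_Rbar_opp p_infty)).
  apply (filterlim_chi alpha m_infty); [| exact Ncdf_lim_m_infty |].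
  - unfold chi_arg. apply (filterlim_Rbar_scal_fun _ _ m_infty); [exact Hm|].
    apply (filterlim_Rbar_plus_fun _ _ 0 m_infty); [reflexivity | exact Hid | exact Hopp].
  - apply (filterlim_Rbar_scal_fun _ _ p_infty); [exact Hp|].
    apply (filterlim_Rbar_plus_fun _ _ 0 p_infty);
      [reflexivity | exact Hid | exact filterlim_Rinv_0_right].
Qed.

Lemma chi_lim_p_infty alpha : 0 < alpha ->
  filterlim (chi alpha) (Rbar_locally p_infty) (locally 1).
Proof.
  intros Ha.
  destruct (is_Rbar_mult_pos_infty (alpha / 2) ltac:(lra)) as [Hp _].
  assert (Hinv := filterlim_Rbar_inv p_infty ltac:(discriminate)).
  assert (Hopp := filterlim_comp _ _ _ _ _ _ _ _ Hinv (filterlim_Rbar_opp (Rbar_inv p_infty))).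
  apply (filterlim_chi alpha p_infty); [| exact Ncdf_lim_p_infty |].
  - unfold chi_arg. apply (filterlim_Rbar_scal_fun _ _ p_infty); [exact Hp|].
    apply (filterlim_Rbar_plus_fun _ _ p_infty (Rbar_opp (Rbar_inv p_infty)));
      [reflexivity | apply filterlim_id | exact Hopp].
  - apply (filterlim_Rbar_scal_fun _ _ p_infty); [exact Hp|].
    apply (filterlim_Rbar_plus_fun _ _ p_infty (Rbar_inv p_infty));
      [reflexivity | apply filterlim_id | exact Hinv].
Qed.

Theorem proposition1 (alpha : R) (halpha : 0 < alpha) :
  (* (i) limits *)
  (filterlim (chi alpha) (at_right 0) (locally 0)
   /\ filterlim (chi alpha) (Rbar_locally p_infty) (locally 1))
  (* (ii) strictly increasing on (0, +oo) *)
  /\ (forall x y : R, 0 < x -> x < y -> chi alpha x < chi alpha y)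
  (* (iii) strictly convex on (0, 1] *)
  /\ (forall x y t : R, 0 < x -> x < y -> y <= 1 -> 0 < t < 1 ->
        chi alpha (t * x + (1 - t) * y) < t * chi alpha x + (1 - t) * chi alpha y)
  (* (iii) strictly concave on [1, +oo) *)
  /\ (forall x y t : R, 1 <= x -> x < y -> 0 < t < 1 ->
        t * chi alpha x + (1 - t) * chi alpha y < chi alpha (t * x + (1 - t) * y)).
Proof.
  set (c := alpha / sqrt (2 * PI)).
  assert (Hc : 0 < c) by exact (Rdiv_lt_0_compat _ _ halpha sqrt_2PI_pos).
  split; [split; [apply chi_lim_0 | apply chi_lim_p_infty]; exact halpha|].
  split; [|split].
  - intros x y Hx Hxy.
    apply (incr_function (chi alpha) 0 p_infty (fun z => c * gauss (chi_arg alpha z)));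
      try (simpl; lra).
    + intros z Hz _. apply is_derive_chi. exact Hz.
    + intros z _ _. apply Rmult_lt_0_compat; [exact Hc | apply gauss_pos].
  - intros x y t Hx Hxy Hy Ht.
    apply (derive_increasing_strict_convex _ (fun z => c * gauss (chi_arg alpha z))); auto.
    + intros z Hz. apply is_derive_chi. lra.
    + intros u v Hu Huv Hv. apply Rmult_lt_compat_l; [exact Hc|].
      apply gauss_chi_arg_lt_le1; lra.
  - intros x y t Hx Hxy Ht.
    apply (derive_decreasing_strict_concave _ (fun z => c * gauss (chi_arg alpha z))); auto.
    + intros z Hz. apply is_derive_chi. lra.
    + intros u v Hu Huv Hv. apply Rmult_lt_compat_l; [exact Hc|].
      apply gauss_chi_arg_lt_ge1; lra.
Qed.
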